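(* Let $\Gamma\cong\mathbb{Z}_p^d$, with $\mathbb{Z}_p$-basis $\sigma_1,\dots,\sigma_d$ and tight set of generators $\tau_1,\dots,\tau_c$. For $m\ge n\ge 0$, put $\nu_{n,m}=\prod_{i=1}^d\nu_{\sigma_i,n,m}\in\Lambda_\Gamma$. Then $\nu_{n,m}\cdot\mathscr J_n\subset\mathscr J_m$.
   Context: $\Lambda_\Gamma=\mathbb{Z}_p[[\Gamma]]$. For $\sigma\in\Gamma$, $\sigma\neq1$: $\omega_{\sigma,n}=\sigma^{p^n}-1$ ($n\ge0$), $\omega_{\sigma,-1}=1$, $\nu_{\sigma,n,m}=\omega_{\sigma,m}/\omega_{\sigma,n}$ ($m\ge n\ge-1$). A set $\tau_1,\dots,\tau_c$ of topological generators of $\Gamma$ is tight if no $\tau_i$ lies in $\Gamma^p$ and the closed subgroups generated by $\tau_i,\tau_j$ are distinct for $i\neq j$. $\mathscr J_n=(\nu_{\tau_1,0,n},\dots,\nu_{\tau_c,0,n})\subset\Lambda_\Gamma$. *)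

(* Concrete model of Gamma = Z_p^d and of the Iwasawa algebra
   Lambda_Gamma = Z_p[[Gamma]] = lim_k (Z/p^(k+1))[Gamma / Gamma^(p^(k+1))]. *)
From mathcomp Require Import all_boot all_order all_algebra.
Set Implicit Arguments. Unset Strict Implicit. Unset Printing Implicit Defensive.
Import GRing.Theory.
Local Open Scope ring_scope.

Section Iwasawa.
Variables (p d : nat).

(* level k : coefficients and group both modulo p^(k+1) *)
Definition Zl (k : nat) := 'Z_(p ^ k.+1).
Definition Gl (k : nat) := 'rV[Zl k]_d.              (* Gamma / Gamma^(p^(k+1)) *)
Definition GRl (k : nat) := {ffun Gl k -> Zl k}.

Definition redZ k (x : Zl k.+1) : Zl k := inZp (x : nat).
Definition redG k (g : Gl k.+1) : Gl k := map_mx (@redZ k) g.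
Definition projGR k (f : GRl k.+1) : GRl k :=
  [ffun y => \sum_(x : Gl k.+1 | redG x == y) redZ (f x)].

Definition deltaGR k (g : Gl k) : GRl k := [ffun x => (x == g)%:R].
Definition oneGR k : GRl k := deltaGR 0.
Definition addGR k (f g : GRl k) : GRl k := [ffun x => f x + g x].
Definition zeroGR k : GRl k := [ffun _ => 0].
Definition mulGR k (f g : GRl k) : GRl k :=
  [ffun z => \sum_(x : Gl k) f x * g (z - x)].

(* Z_p : compatible families *)
Definition ZpF := forall k, Zl k.
Definition isZp (a : ZpF) := forall k, redZ (a k.+1) = a k.

(* Gamma = Z_p^d : compatible families of row vectors; written additively *)
Definition GamF := forall k, Gl k.
Definition isGam (g : GamF) := forall k, redG (g k.+1) = g k.
Definition zscale (a : ZpF) (g : GamF) : GamF := fun k => g k *+ (a k : nat).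

(* Lambda_Gamma : compatible families of group ring elements *)
Definition LamF := forall k, GRl k.
Definition isLam (x : LamF) := forall k, projGR (x k.+1) = x k.
Definition mulL (x y : LamF) : LamF := fun k => mulGR (x k) (y k).

Definition is_Zp_basis (s : 'I_d -> GamF) :=
  (forall i, isGam (s i)) /\
  (forall g, isGam g ->
     exists a : 'I_d -> ZpF, (forall i, isZp (a i)) /\
       forall k, g k = \sum_(i < d) zscale (a i) (s i) k) /\
  (forall a b : 'I_d -> ZpF, (forall i, isZp (a i)) -> (forall i, isZp (b i)) ->
     (forall k, \sum_(i < d) zscale (a i) (s i) k = \sum_(i < d) zscale (b i) (s i) k) ->
     forall i k, a i k = b i k).

(* g lies in the closed subgroup generated by the family t: for every open
   subgroup Gamma^(p^(k+1)), g lies in <t> Gamma^(p^(k+1)) *)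
Definition in_closed_span c (t : 'I_c -> GamF) (g : GamF) :=
  forall k, exists e : 'I_c -> nat, g k = \sum_(i < c) t i k *+ e i.
Definition in_closed_span1 (t : GamF) (g : GamF) :=
  forall k, exists e : nat, g k = t k *+ e.

Definition tight c (t : 'I_c -> GamF) :=
  (forall i, isGam (t i)) /\
  (forall g, isGam g -> in_closed_span t g) /\
  (forall i, ~ exists g, isGam g /\ forall k, t i k = g k *+ p) /\
  (forall i j, i != j ->
     ~ (forall g, isGam g -> (in_closed_span1 (t i) g <-> in_closed_span1 (t j) g))).

(* nu_{sigma,n,m} = omega_{sigma,m}/omega_{sigma,n}
                  = sum_{j < p^(m-n)} sigma^(j p^n)   (m >= n >= 0) *)
Definition nuS (s : GamF) (n m : nat) : LamF := fun k =>
  \big[@addGR k/zeroGR k]_(j < p ^ (m - n)) deltaGR (s k *+ (j * p ^ n)%N).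

Definition nuNM (s : 'I_d -> GamF) (n m : nat) : LamF := fun k =>
  \big[@mulGR k/oneGR k]_(i < d) nuS (s i) n m k.

Definition in_ideal c (gs : 'I_c -> LamF) (x : LamF) :=
  exists a : 'I_c -> LamF, (forall i, isLam (a i)) /\
    forall k, x k = \big[@addGR k/zeroGR k]_(i < c) mulGR (a i k) (gs i k).

Definition in_J c (t : 'I_c -> GamF) (n : nat) (x : LamF) :=
  in_ideal (fun i => nuS (t i) 0 n) x.

End Iwasawa.

(* Fix a level k and compute in Z/p^(k+1)[Gamma/Gamma^(p^(k+1))] modulo J_m.  As the tau_j
   topologically generate Gamma and tau_j^(p^m) = 1 mod J_m, also sigma_s^(p^m) = 1 mod J_m.
   A generator tau is not a p-th power, so some coordinate a_s0 of tau in the basis sigma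
   is a p-adic unit.  Put y_s = sigma_s^(p^n) and M = p^(m-n): multiplication by a_s0
   permutes Z/M, so nu(y_s0, M) = nu(y_s0^a_s0, M), while every nu(y_s, M) absorbs the
   powers of y_s.  Hence nu_(n,m) = nu(tau^(p^n), M) * P, with P the product of the
   nu(y_s, M) for s <> s0, and multiplying by nu(tau, p^n) gives nu(tau, p^m) * P, which
   lies in J_m.  The coefficient vectors found at the various levels form an inverse
   system of nonempty finite sets, from which a compatible family is extracted by
   compactness. *)

From HB Require Import structures.
From Stdlib Require Import Classical ClassicalEpsilon.
From mathcomp Require Import all_boot all_order all_algebra zify.
Set Implicit Arguments. Unset Strict Implicit. Unset Printing Implicit Defensive.

Lemma finite_common_bound (Y : finType) (Q : Y -> nat -> Prop) :
  (forall y j j', j <= j' -> Q y j' -> Q y j) ->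
  (forall y, exists j, ~ Q y j) -> exists J, forall y, ~ Q y J.
Proof.
move=> Qmono Qfail.
suff [J HJ] : exists J, forall y, y \in enum Y -> ~ Q y J.
  by exists J => y; apply: HJ; rewrite mem_enum.
elim: (enum Y) => [|y s [J IH]]; first by exists 0.
have [j Hj] := Qfail y; exists (maxn j J) => z.
rewrite inE => /orP [/eqP -> | zs] HQ.
  exact/Hj/(Qmono _ _ _ (leq_maxl j J)).
exact/(IH z zs)/(Qmono _ _ _ (leq_maxr j J)).
Qed.

Section FiniteInverseLimit.
Variables (X : nat -> finType) (pr : forall k, X k.+1 -> X k).
Variable A : forall k, X k -> Prop.
Hypothesis A_nonempty : forall k, exists x, A (k := k) x.
Hypothesis A_pr : forall k (x : X k.+1), A x -> A (pr x).

Fixpoint liftable (j : nat) : forall k, X k -> Prop :=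
  if j is j'.+1 then fun k x => exists y, pr y = x /\ liftable j' y else A.

Lemma liftable_nonempty j k : exists x, liftable j (k := k) x.
Proof.
elim: j k => [|j IH] k; first exact: A_nonempty.
by have [y Hy] := IH k.+1; exists (pr y), y.
Qed.

Lemma liftable_succ j k (x : X k) : liftable j.+1 x -> liftable j x.
Proof.
elim: j k x => [|j IH] k x /= [y [<- Hy]]; first exact: A_pr.
by exists y; split => //; apply: IH.
Qed.

Lemma liftable_mono j j' k (x : X k) : j <= j' -> liftable j' x -> liftable j x.
Proof.
move=> /subnK <-; elim: (j' - j) => [|i IH] //= Hx.
exact/IH/liftable_succ.
Qed.

Definition always_liftable k (x : X k) := forall j, liftable j x.

Lemma always_liftable_nonempty k : exists x, always_liftable (k := k) x.
Proof.
apply: NNPP => none.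
have fails (x : X k) : exists j, ~ liftable j x.
  by apply: not_all_ex_not => Hx; apply: none; exists x.
have [J HJ] := finite_common_bound (fun x j j' => @liftable_mono j j' k x) fails.
by have [x Hx] := liftable_nonempty J k; apply: (HJ x).
Qed.

Lemma always_liftable_lift k (x : X k) :
  always_liftable x -> exists y, pr y = x /\ always_liftable y.
Proof.
move=> Hx; apply: NNPP => none.
pose Q y j := pr y = x /\ liftable j y.
have fails (y : X k.+1) : exists j, ~ Q y j.
  apply: not_all_ex_not => Hy; apply: none; exists y.
  by split; [case: (Hy 0) | move=> j; case: (Hy j)].
have Qmono y j j' : j <= j' -> Q y j' -> Q y j.
  by move=> le [? ?]; split => //; apply: liftable_mono le _.
have [J HJ] := finite_common_bound Qmono fails.
by have [y Hy] := Hx J.+1; apply: (HJ y).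
Qed.

Fixpoint thread (k : nat) : {x : X k | always_liftable x} :=
  if k is k'.+1 then
    let y := constructive_indefinite_description _
               (always_liftable_lift (proj2_sig (thread k'))) in
    exist _ (proj1_sig y) (proj2 (proj2_sig y))
  else constructive_indefinite_description _ (always_liftable_nonempty 0).

Lemma finite_inverse_limit_nonempty :
  exists f : forall k, X k, (forall k, A (f k)) /\ (forall k, pr (f k.+1) = f k).
Proof.
exists (fun k => proj1_sig (thread k)); split => [k | k /=].
  exact: (proj2_sig (thread k) 0).
exact: (proj1 (proj2_sig (constructive_indefinite_description _
  (always_liftable_lift (proj2_sig (thread k)))))).
Qed.

End FiniteInverseLimit.

Import GRing.Theory.
Local Open Scope ring_scope.

Section GeometricSums.
Variable R : comPzRingType.

Definition geom_sum (x : R) (N : nat) := \sum_(i < N) x ^+ i.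

Lemma geom_sumD x a b : geom_sum x (a + b) = geom_sum x a + x ^+ a * geom_sum x b.
Proof.
rewrite /geom_sum big_split_ord /= mulr_sumr; congr (_ + _).
by apply: eq_bigr => i _; rewrite exprD.
Qed.

Lemma geom_sumM x u M : geom_sum x (u * M) = geom_sum x u * geom_sum (x ^+ u) M.
Proof.
elim: M => [|M IH]; first by rewrite muln0 /geom_sum !big_ord0 mulr0.
rewrite mulnS addnC geom_sumD IH /geom_sum [in RHS]big_ord_recr /= mulrDr.
by congr (_ + _); rewrite -exprM mulrC.
Qed.

Lemma subrX1_geom_sum x N : x ^+ N - 1 = (x - 1) * geom_sum x N.
Proof. exact: subrX1. Qed.

End GeometricSums.

Section IdealCongruence.
Variables (R : comPzRingType) (c : nat) (g : 'I_c -> R).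

Definition in_gen_ideal (r : R) := exists b : 'I_c -> R, r = \sum_i b i * g i.
Definition eqmodI (a b : R) := in_gen_ideal (a - b).

Lemma in_gen_ideal0 : in_gen_ideal 0.
Proof. by exists (fun=> 0); rewrite big1 // => i _; rewrite mul0r. Qed.

Lemma in_gen_idealD a b : in_gen_ideal a -> in_gen_ideal b -> in_gen_ideal (a + b).
Proof.
move=> [u ->] [v ->]; exists (fun i => u i + v i); rewrite -big_split /=.
by apply: eq_bigr => i _; rewrite mulrDl.
Qed.

Lemma in_gen_idealMl r a : in_gen_ideal a -> in_gen_ideal (r * a).
Proof.
move=> [u ->]; exists (fun i => r * u i); rewrite mulr_sumr.
by apply: eq_bigr => i _; rewrite mulrA.
Qed.

Lemma in_gen_ideal_gen i : in_gen_ideal (g i).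
Proof.
exists (fun j => (j == i)%:R); rewrite (bigD1 i) //= big1 => [|j /negPf->].
  by rewrite eqxx mul1r addr0.
by rewrite mul0r.
Qed.

Lemma in_gen_ideal_sum I (r : seq I) (P : pred I) (F : I -> R) :
  (forall i, P i -> in_gen_ideal (F i)) -> in_gen_ideal (\sum_(i <- r | P i) F i).
Proof. by move=> FI; apply: big_ind => //; [exact: in_gen_ideal0 | exact: in_gen_idealD]. Qed.

Lemma eqmodI_refl a : eqmodI a a.
Proof. by rewrite /eqmodI subrr; exact: in_gen_ideal0. Qed.

Lemma eqmodI_sym a b : eqmodI a b -> eqmodI b a.
Proof. by move=> ab; rewrite /eqmodI -opprB -mulN1r; apply: in_gen_idealMl. Qed.

Lemma eqmodI_trans b a e : eqmodI a b -> eqmodI b e -> eqmodI a e.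
Proof. by move=> ab be; rewrite /eqmodI -(subrKA b); apply: in_gen_idealD. Qed.

Lemma eqmodI_in_gen_ideal a b : eqmodI a b -> in_gen_ideal b -> in_gen_ideal a.
Proof. by move=> ab bI; rewrite -(subrK b a); apply: in_gen_idealD. Qed.

Lemma eqmodID a b a' b' : eqmodI a b -> eqmodI a' b' -> eqmodI (a + a') (b + b').
Proof. by move=> ab ab'; rewrite /eqmodI opprD addrACA; apply: in_gen_idealD. Qed.

Lemma eqmodIMl r a b : eqmodI a b -> eqmodI (r * a) (r * b).
Proof. by move=> ab; rewrite /eqmodI -mulrBr; apply: in_gen_idealMl. Qed.

Lemma eqmodIM a b a' b' : eqmodI a b -> eqmodI a' b' -> eqmodI (a * a') (b * b').
Proof.
move=> ab ab'; apply: (eqmodI_trans (b := a * b')); first exact: eqmodIMl.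
by rewrite ![_ * b']mulrC; apply: eqmodIMl.
Qed.

Lemma eqmodI_sum I (r : seq I) (P : pred I) (F G : I -> R) :
  (forall i, P i -> eqmodI (F i) (G i)) ->
  eqmodI (\sum_(i <- r | P i) F i) (\sum_(i <- r | P i) G i).
Proof. by move=> FG; apply: (big_ind2 eqmodI) => //; [exact: eqmodI_refl | exact: eqmodID]. Qed.

Lemma eqmodI_prod I (r : seq I) (P : pred I) (F G : I -> R) :
  (forall i, P i -> eqmodI (F i) (G i)) ->
  eqmodI (\prod_(i <- r | P i) F i) (\prod_(i <- r | P i) G i).
Proof. by move=> FG; apply: (big_ind2 eqmodI) => //; [exact: eqmodI_refl | exact: eqmodIM]. Qed.

Lemma eqmodI_prod1 I (r : seq I) (P : pred I) (F : I -> R) :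
  (forall i, P i -> eqmodI (F i) 1) -> eqmodI (\prod_(i <- r | P i) F i) 1.
Proof.
move=> F1; apply: (big_ind (eqmodI^~ 1)) => //; first exact: eqmodI_refl.
by move=> x y x1 y1; rewrite -(mulr1 1); apply: eqmodIM.
Qed.

Lemma eqmodI_expr1 x e : eqmodI x 1 -> eqmodI (x ^+ e) 1.
Proof. by move=> x1; rewrite -(subn0 e) -prodr_const_nat; apply: eqmodI_prod1. Qed.

Lemma eqmodI_expr1_geom_sum x N : in_gen_ideal (geom_sum x N) -> eqmodI (x ^+ N) 1.
Proof. by move=> xI; rewrite /eqmodI subrX1_geom_sum; apply: in_gen_idealMl. Qed.

Section RootOfUnity.
Variables (y : R) (M : nat).
Hypothesis yM1 : eqmodI (y ^+ M) 1.

Lemma eqmodI_expr_modn e : eqmodI (y ^+ e) (y ^+ (e %% M)).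
Proof.
rewrite {1}(divn_eq e M) exprD mulnC exprM -[X in eqmodI _ X]mul1r.
by apply: eqmodIM; [exact: eqmodI_expr1 | exact: eqmodI_refl].
Qed.

Lemma geom_sum_absorb a : eqmodI (y ^+ a * geom_sum y M) (geom_sum y M).
Proof.
elim: a => [|a IH]; first by rewrite expr0 mul1r; exact: eqmodI_refl.
rewrite exprSr -mulrA; apply: eqmodI_trans IH; apply: eqmodIMl.
by rewrite /eqmodI -[X in _ - X]mul1r -mulrBl -subrX1_geom_sum.
Qed.

Lemma geom_sum_coprime a : coprime M a -> eqmodI (geom_sum (y ^+ a) M) (geom_sum y M).
Proof.
move=> coMa; have [M0|M_gt0] := posnP M.
  by rewrite /geom_sum M0 !big_ord0; exact: eqmodI_refl.
pose h (j : 'I_M) : 'I_M := Ordinal (ltn_pmod (a * j) M_gt0).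
have h_inj : injective h.
  suff h_le (i j : 'I_M) : (i <= j)%N -> h i = h j -> i = j.
    by move=> i j; case: (leqP i j) => [/h_le//|/ltnW /h_le hji /esym/hji].
  move=> le /(congr1 val) /= hij; apply: val_inj => /=.
  have : (M %| j - i)%N.
    rewrite -(Gauss_dvdr _ coMa) mulnBr -eqn_mod_dvd; first by rewrite hij.
    by rewrite leq_mul2l le orbT.
  have := ltn_ord j; case: (posnP (j - i)%N) => [|pos lt /(dvdn_leq pos)]; lia.
rewrite /geom_sum [X in eqmodI _ X](reindex_inj h_inj) /=.
by apply: eqmodI_sum => j _; rewrite -exprM; exact: eqmodI_expr_modn.
Qed.

End RootOfUnity.

Lemma prod_geom_sum_mem d (t : R) (x : 'I_d -> R) (a : 'I_d -> nat) s0 u M :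
  coprime M (a s0) -> (forall s, eqmodI (x s ^+ (u * M)) 1) ->
  t = \prod_s x s ^+ a s -> in_gen_ideal (geom_sum t (u * M)) ->
  in_gen_ideal (\prod_s geom_sum (x s ^+ u) M * geom_sum t u).
Proof.
move=> coMa x1 tE tI; pose y s := x s ^+ u.
have yM1 s : eqmodI (y s ^+ M) 1 by rewrite -exprM.
pose P := \prod_(s | s != s0) geom_sum (y s) M.
have tuE : t ^+ u = y s0 ^+ a s0 * \prod_(s | s != s0) y s ^+ a s.
  by rewrite tE -prodrXl (bigD1 s0) //=; congr (_ * _); [|apply: eq_bigr => s _];
    rewrite /y exprAC.
have prodE : eqmodI (\prod_s geom_sum (y s) M) (geom_sum (t ^+ u) M * P).
  rewrite (bigD1 s0) //=; apply: (eqmodI_trans (b := geom_sum (y s0 ^+ a s0) M * P)).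
    by apply: eqmodIM; [apply/eqmodI_sym/geom_sum_coprime | exact: eqmodI_refl].
  rewrite /geom_sum !mulr_suml; apply: eqmodI_sum => j _.
  rewrite tuE exprMn -mulrA; apply: eqmodIMl.
  rewrite -prodrXl -big_split /=; apply: eqmodI_sym; apply: eqmodI_prod => s _.
  by rewrite -exprM; exact: geom_sum_absorb.
apply: (eqmodI_in_gen_ideal (b := geom_sum (t ^+ u) M * P * geom_sum t u)).
  by apply: eqmodIM; [exact: prodE | exact: eqmodI_refl].
by rewrite mulrAC mulrC [_ * geom_sum t u]mulrC -geom_sumM; apply: in_gen_idealMl.
Qed.

End IdealCongruence.

Section GroupRing.
Variables (p d k : nat).
Local Notation R := (GRl p d k).

HB.instance Definition _ := GRing.Zmodule.copy R {ffun Gl p d k -> Zl p k}.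

Lemma mulGRC : commutative (@mulGR p d k).
Proof.
move=> f g; apply/ffunP=> z; rewrite !ffunE (reindex_inj (can_inj (subKr z))) /=.
by apply: eq_bigr => x _; rewrite subKr mulrC.
Qed.

Lemma mulGRA : associative (@mulGR p d k).
Proof.
move=> f g h; apply/ffunP=> z; rewrite !ffunE; symmetry.
under eq_bigr do rewrite ffunE mulr_suml.
under [RHS]eq_bigr do rewrite ffunE mulr_sumr.
rewrite exchange_big /=; apply: eq_bigr => w _.
rewrite (reindex_inj (addIr w)) /=; apply: eq_bigr => v _.
by rewrite addrK mulrA opprD addrA [_ - v - w]addrAC.
Qed.

Lemma mul1GR : left_id (oneGR p d k) (@mulGR p d k).
Proof.
move=> f; apply/ffunP=> z; rewrite !ffunE (bigD1 0) //= big1 => [|x /negPf x0].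
  by rewrite ffunE eqxx mul1r subr0 addr0.
by rewrite ffunE x0 mul0r.
Qed.

Lemma mulGRDl : left_distributive (@mulGR p d k) +%R.
Proof.
move=> f g h; apply/ffunP=> z; rewrite !ffunE -big_split /=.
by apply: eq_bigr => x _; rewrite ffunE mulrDl.
Qed.

HB.instance Definition _ := GRing.Zmodule_isComPzRing.Build R mulGRA mulGRC mul1GR mulGRDl.

Lemma mulGRE (f g : R) : mulGR f g = f * g.
Proof. by []. Qed.

Lemma big_addGRE I (r : seq I) (P : pred I) (F : I -> R) :
  \big[@addGR p d k/zeroGR p d k]_(i <- r | P i) F i = \sum_(i <- r | P i) F i.
Proof. by []. Qed.

Lemma big_mulGRE I (r : seq I) (P : pred I) (F : I -> R) :
  \big[@mulGR p d k/oneGR p d k]_(i <- r | P i) F i = \prod_(i <- r | P i) F i.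
Proof. by []. Qed.

Lemma deltaGRD (a b : Gl p d k) : deltaGR (a + b) = deltaGR a * deltaGR b.
Proof.
apply/ffunP => z; rewrite [RHS]ffunE (bigD1 a) //= big1 => [|x /negPf xa].
  by rewrite !ffunE eqxx mul1r addr0 subr_eq addrC.
by rewrite [deltaGR a x]ffunE xa mul0r.
Qed.

Lemma deltaGRMn (a : Gl p d k) n : deltaGR (a *+ n) = deltaGR a ^+ n.
Proof. by elim: n => [|n IH] //; rewrite mulrS exprS deltaGRD IH. Qed.

Lemma deltaGR_sum I (r : seq I) (P : pred I) (F : I -> Gl p d k) :
  deltaGR (\sum_(i <- r | P i) F i) = \prod_(i <- r | P i) deltaGR (F i).
Proof. exact: (big_morph _ deltaGRD). Qed.

Lemma nuS_geom_sum (s : GamF p d) n m :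
  nuS s n m k = geom_sum (deltaGR (s k) ^+ (p ^ n)) (p ^ (m - n)).
Proof. by apply: eq_bigr => j _; rewrite deltaGRMn mulnC exprM. Qed.

Lemma nuS0_geom_sum (s : GamF p d) m : nuS s 0 m k = geom_sum (deltaGR (s k)) (p ^ m).
Proof. by rewrite nuS_geom_sum expr1 subn0. Qed.

End GroupRing.

Section Reduction.
Variable p : nat.
(* [Zl p k] is Z/(modulus k); the modulus is p^(k+1) when p > 1 and 2 otherwise, so that
   in all cases reduction of coefficients is a ring morphism. *)
Local Notation modulus k := (Zp_trunc (p ^ k.+1)).+2.

Lemma modulus_dvd k : (modulus k %| modulus k.+1)%N.
Proof.
have [p_le1|p_gt1] := leqP p 1.
  have : p = 0 \/ p = 1 by lia.
  by case=> ->; rewrite ?exp0n ?exp1n.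
have pX_gt1 j : (1 < p ^ j.+1)%N by rewrite -{1}(expn0 p) ltn_exp2l.
by rewrite !Zp_cast ?dvdn_exp2l.
Qed.

Lemma val_redZ k (x : Zl p k.+1) : val (redZ x) = (val x %% modulus k)%N.
Proof. by []. Qed.

Lemma redZ0 k : @redZ p k 0 = 0.
Proof. by apply: val_inj; rewrite val_redZ mod0n. Qed.

Lemma redZD k : {morph @redZ p k : x y / x + y}.
Proof.
move=> x y; apply: val_inj; rewrite val_redZ /= modnDm.
by rewrite (modn_dvdm _ (modulus_dvd k)).
Qed.

Lemma redZM k : {morph @redZ p k : x y / x * y}.
Proof.
move=> x y; apply: val_inj; rewrite val_redZ /= modnMm.
by rewrite (modn_dvdm _ (modulus_dvd k)).
Qed.

Lemma redZ1 k : @redZ p k 1 = 1.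
Proof. by apply: val_inj; rewrite val_redZ /= (modn_dvdm _ (modulus_dvd k)). Qed.

HB.instance Definition _ k :=
  GRing.isNmodMorphism.Build (Zl p k.+1) (Zl p k) (@redZ p k) (redZ0 k, @redZD k).
HB.instance Definition _ k :=
  GRing.isMonoidMorphism.Build (Zl p k.+1) (Zl p k) (@redZ p k) (redZ1 k, @redZM k).

Lemma redGD d k : {morph @redG p d k : u v / u + v}.
Proof. by move=> u v; apply/matrixP => i j; rewrite !mxE rmorphD. Qed.

Lemma redG0 d k : @redG p d k 0 = 0.
Proof. by apply/matrixP => i j; rewrite !mxE rmorph0. Qed.

HB.instance Definition _ d k := GRing.isNmodMorphism.Build
  (Gl p d k.+1) (Gl p d k) (@redG p d k) (redG0 d k, @redGD d k).

Section ProjGR.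
Variables d k : nat.

Lemma projGRE (f : GRl p d k.+1) y :
  projGR f y = \sum_x (redG x == y)%:R * redZ (f x).
Proof.
rewrite ffunE big_mkcond /=; apply: eq_bigr => x _.
by case: eqP => _; rewrite ?mul1r ?mul0r.
Qed.

Lemma projGR0 : projGR (0 : GRl p d k.+1) = 0.
Proof.
apply/ffunP => y; rewrite projGRE !ffunE big1 // => x _.
by rewrite ffunE rmorph0 mulr0.
Qed.

Lemma projGRD : {morph @projGR p d k : f g / f + g}.
Proof.
move=> f g; apply/ffunP => y; rewrite projGRE [RHS]ffunE !projGRE -big_split /=.
by apply: eq_bigr => x _; rewrite ffunE rmorphD mulrDr.
Qed.

Lemma projGR_delta (g : Gl p d k.+1) : projGR (deltaGR g) = deltaGR (redG g).
Proof.
apply/ffunP => y; rewrite projGRE [RHS]ffunE (bigD1 g) //= big1 => [|x /negPf xg].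
  by rewrite ffunE eqxx rmorph1 mulr1 addr0 eq_sym.
by rewrite ffunE xg rmorph0 mulr0.
Qed.

Lemma projGR1 : projGR (1 : GRl p d k.+1) = 1.
Proof. by rewrite projGR_delta raddf0. Qed.

Lemma projGRM : {morph @projGR p d k : f g / f * g}.
Proof.
move=> f g; apply/ffunP => y; rewrite projGRE [RHS]ffunE.
transitivity (\sum_w \sum_v (redG v == y - redG w)%:R * (redZ (f w) * redZ (g v))).
  under eq_bigr do rewrite ffunE rmorph_sum mulr_sumr.
  rewrite exchange_big /=; apply: eq_bigr => w _.
  rewrite (reindex_inj (addIr w)) /=; apply: eq_bigr => v _.
  by rewrite addrK rmorphM raddfD -subr_eq eq_sym opprK eq_sym.
symmetry; under eq_bigr do rewrite !projGRE mulr_suml.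
under eq_bigr do under eq_bigr do rewrite mulr_sumr.
rewrite exchange_big /=; apply: eq_bigr => w _.
rewrite exchange_big /=; apply: eq_bigr => v _.
rewrite (bigD1 (redG w)) //= big1 => [|u /negPf uw].
  by rewrite eqxx mul1r addr0 mulrCA.
by rewrite eq_sym uw mul0r mul0r.
Qed.

End ProjGR.

HB.instance Definition _ d k := GRing.isNmodMorphism.Build
  (GRl p d k.+1) (GRl p d k) (@projGR p d k) (projGR0 d k, @projGRD d k).
HB.instance Definition _ d k := GRing.isMonoidMorphism.Build
  (GRl p d k.+1) (GRl p d k) (@projGR p d k) (projGR1 d k, @projGRM d k).

End Reduction.

Section Compatibility.
Variables (p d : nat).
Hypothesis p_gt1 : (1 < p)%N.

Lemma Zl_modulus k : (Zp_trunc (p ^ k.+1)).+2 = (p ^ k.+1)%N.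
Proof. by rewrite Zp_cast // -{1}(expn0 p) ltn_exp2l. Qed.

Lemma val_Zl_natr k n : val (n%:R : Zl p k) = (n %% p ^ k.+1)%N.
Proof. by rewrite Zp_nat /= Zl_modulus. Qed.

Lemma val_redZ_pow k (x : Zl p k.+1) : val (redZ x) = (val x %% p ^ k.+1)%N.
Proof. by rewrite val_redZ -[X in _ = (_ %% X)%N]Zl_modulus. Qed.

Lemma isZp_val (a : ZpF p) : isZp a -> forall k, (a k : nat) = (a k.+1 %% p ^ k.+1)%N.
Proof. by move=> a_Zp k; rewrite -(a_Zp k) val_redZ_pow. Qed.

Lemma isZp_modp (a : ZpF p) : isZp a -> forall k, (a k %% p = a 0 %% p)%N.
Proof.
move=> a_Zp; elim=> [|k IH] //; rewrite -IH [in RHS](isZp_val a_Zp k) modn_dvdm //.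
by rewrite expnS dvdn_mulr.
Qed.

Lemma Gl_mulrn_eqmod k (v : Gl p d k) a b : a = b %[mod p ^ k.+1] -> v *+ a = v *+ b.
Proof.
suff v_mod c : v *+ c = v *+ (c %% p ^ k.+1) by move=> ab; rewrite v_mod ab -v_mod.
rewrite {1}(divn_eq c (p ^ k.+1)) mulrnDr mulnC mulrnA.
suff -> : v *+ (p ^ k.+1) = 0 by rewrite mul0rn add0r.
apply/matrixP => i j; rewrite mulmxnE mxE -mulr_natr.
suff -> : ((p ^ k.+1)%N%:R : Zl p k) = 0 by rewrite mulr0.
by apply: val_inj; rewrite val_Zl_natr modnn.
Qed.

Lemma isGam_zscale_sum (s : 'I_d -> GamF p d) (a : 'I_d -> ZpF p) :
  (forall i, isGam (s i)) -> (forall i, isZp (a i)) ->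
  isGam (fun k => \sum_i zscale (a i) (s i) k).
Proof.
move=> s_Gam a_Zp k; rewrite raddf_sum; apply: eq_bigr => i _.
rewrite /zscale raddfMn /= s_Gam; apply: Gl_mulrn_eqmod.
by rewrite (isZp_val (a_Zp i) k) modn_mod.
Qed.

(* Level k of a / p needs the digits of a up to level k+1. *)
Definition divp_Zp (a : ZpF p) : ZpF p := fun k => ((a k.+1 : nat) %/ p)%:R.

Lemma divp_ZpP (a : ZpF p) : isZp a -> (p %| a 0)%N ->
  isZp (divp_Zp a) /\ forall k, (divp_Zp a k * p = a k %[mod p ^ k.+1])%N.
Proof.
move=> a_Zp p_dvd; have p_gt0 := ltnW p_gt1.
have dvd_a k : (p %| a k)%N by rewrite /dvdn isZp_modp.
have divp_val k : (a k.+1 %/ p = (a k.+2 %/ p) %% p ^ k.+1)%N.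
  apply/eqP; rewrite -(eqn_pmul2l p_gt0) muln_modr -expnS.
  by rewrite mulnC divnK // [(p * _)%N]mulnC divnK // -isZp_val.
split=> [k | k].
  apply: val_inj; rewrite val_redZ_pow !val_Zl_natr modn_dvdm ?dvdn_exp2l //.
  by rewrite (divp_val k) modn_mod.
by rewrite val_Zl_natr modnMml divnK ?dvd_a // [in RHS](isZp_val a_Zp k) modn_mod.
Qed.

Lemma not_pth_power_unit_coord (s : 'I_d -> GamF p d) (g : GamF p d) (a : 'I_d -> ZpF p) :
  (forall i, isGam (s i)) -> (forall i, isZp (a i)) ->
  (forall k, g k = \sum_i zscale (a i) (s i) k) ->
  ~ (exists h, isGam h /\ forall k, g k = h k *+ p) ->
  exists i, ~~ (p %| a i 0)%N.
Proof.
move=> s_Gam a_Zp gE not_pth_power.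
have [/existsP //|/existsPn all_dvd] := boolP [exists i, ~~ (p %| a i 0)%N].
have b_Zp i := divp_ZpP (a_Zp i) (negbNE (all_dvd i)).
case: not_pth_power; exists (fun k => \sum_i zscale (divp_Zp (a i)) (s i) k); split.
  by apply: isGam_zscale_sum => // i; case: (b_Zp i).
move=> k; rewrite gE -sumrMnl; apply: eq_bigr => i _; rewrite /zscale -mulrnA.
by apply: Gl_mulrn_eqmod; case: (b_Zp i) => _ ->.
Qed.

End Compatibility.

Section LambdaCompatibility.
Variables p d : nat.

Lemma isLam_nuS (s : GamF p d) n m : isGam s -> isLam (nuS s n m).
Proof.
move=> s_Gam k; rewrite /nuS !big_addGRE rmorph_sum; apply: eq_bigr => j _.
by rewrite /= projGR_delta raddfMn /= s_Gam.
Qed.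

Lemma isLam_nuNM (s : 'I_d -> GamF p d) n m : (forall i, isGam (s i)) -> isLam (nuNM s n m).
Proof.
move=> s_Gam k; rewrite /nuNM !big_mulGRE rmorph_prod; apply: eq_bigr => i _.
exact: isLam_nuS.
Qed.

Lemma isLam_sum_mul c (a g : 'I_c -> LamF p d) :
  (forall i, isLam (a i)) -> (forall i, isLam (g i)) ->
  isLam (fun k => \sum_i a i k * g i k).
Proof.
move=> a_Lam g_Lam k; rewrite rmorph_sum; apply: eq_bigr => i _.
by rewrite rmorphM /= a_Lam g_Lam.
Qed.

Lemma in_ideal_levelwise c (g : 'I_c -> LamF p d) (y : LamF p d) :
  (forall i, isLam (g i)) -> isLam y ->
  (forall k, in_gen_ideal (fun i => g i k) (y k)) -> in_ideal g y.
Proof.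
move=> g_Lam y_Lam y_mem.
pose X k := {ffun 'I_c -> GRl p d k}.
pose pr k (b : X k.+1) : X k := [ffun i => projGR (b i)].
pose A k (b : X k) := y k = \sum_i b i * g i k.
have A_nonempty k : exists b, A k b.
  have [b yE] := y_mem k; exists [ffun i => b i].
  by rewrite /A yE; apply: eq_bigr => i _; rewrite ffunE.
have A_pr k (b : X k.+1) : A k.+1 b -> A k (pr k b).
  rewrite /A => yE; rewrite -y_Lam yE rmorph_sum; apply: eq_bigr => i _.
  by rewrite ffunE rmorphM /= g_Lam.
have [f [fA f_pr]] := finite_inverse_limit_nonempty A_nonempty A_pr.
exists (fun i k => f k i); split => [i k | k]; last exact: fA.
by rewrite -(f_pr k) ffunE.
Qed.

End LambdaCompatibility.

Section Levelwise.
Variables (p d c : nat) (tau : 'I_c -> GamF p d) (m k : nat).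
Local Notation J_m := (fun j => nuS (tau j) 0 m k).

Lemma nuS0_mem j : in_gen_ideal J_m (geom_sum (deltaGR (tau j k)) (p ^ m)).
Proof. by rewrite -nuS0_geom_sum; apply: in_gen_ideal_gen. Qed.

Lemma closed_span_expr_eqmod1 (g : GamF p d) :
  in_closed_span tau g -> eqmodI J_m (deltaGR (g k) ^+ (p ^ m)) 1.
Proof.
move=> /(_ k) [e ->]; rewrite deltaGR_sum -prodrXl; apply: eqmodI_prod1 => j _.
rewrite deltaGRMn exprAC; apply/eqmodI_expr1/eqmodI_expr1_geom_sum.
exact: nuS0_mem.
Qed.

End Levelwise.

Lemma nuNM_mul_nuS_mem p d c (sigma : 'I_d -> GamF p d) (tau : 'I_c -> GamF p d) n m k i :
  prime p -> is_Zp_basis sigma -> tight tau -> (n <= m)%N ->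
  in_gen_ideal (fun j => nuS (tau j) 0 m k) (nuNM sigma n m k * nuS (tau i) 0 n k).
Proof.
move=> p_prime [sigma_Gam [sigma_span _]] [tau_Gam [tau_span [tau_not_pth _]]] le_nm.
have [a [a_Zp tauE]] := sigma_span _ (tau_Gam i).
have [s0 a_unit] :=
  not_pth_power_unit_coord (prime_gt1 p_prime) sigma_Gam a_Zp tauE (tau_not_pth i).
have pm : (p ^ n * p ^ (m - n))%N = (p ^ m)%N by rewrite -expnD subnKC.
rewrite /nuNM big_mulGRE; under eq_bigr do rewrite nuS_geom_sum.
rewrite nuS0_geom_sum.
apply: (prod_geom_sum_mem (a := fun s => a s k : nat) (s0 := s0)); rewrite ?pm.
- rewrite coprimeXl // prime_coprime //.
  by rewrite /dvdn (isZp_modp (prime_gt1 p_prime) (a_Zp s0)).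
- by move=> s; apply: closed_span_expr_eqmod1; apply: tau_span.
- by rewrite tauE deltaGR_sum; apply: eq_bigr => s _; rewrite deltaGRMn.
- exact: nuS0_mem.
Qed.

Theorem lemma2p5 (p d c : nat) (sigma : 'I_d -> GamF p d) (tau : 'I_c -> GamF p d)
  (n m : nat) :
  prime p -> is_Zp_basis sigma -> tight tau -> (n <= m)%N ->
  forall x : LamF p d, in_J tau n x -> in_J tau m (mulL (nuNM sigma n m) x).
Proof.
move=> p_prime sigma_basis tau_tight le_nm x [a [a_Lam xE]].
have [sigma_Gam _] := sigma_basis; have [tau_Gam _] := tau_tight.
have x_Lam : isLam x.
  move=> k; rewrite !xE.
  exact: (isLam_sum_mul a_Lam (fun i => isLam_nuS 0 n (tau_Gam i))).
apply: in_ideal_levelwise => [i | k | k]; first exact: isLam_nuS.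
  by rewrite /mulL !mulGRE rmorphM /= x_Lam isLam_nuNM.
rewrite /mulL xE mulGRE big_addGRE mulr_sumr; apply: in_gen_ideal_sum => i _.
by rewrite mulGRE mulrCA; apply/in_gen_idealMl/nuNM_mul_nuS_mem.
Qed.
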